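(* Let $\bar g$ be a two-dimensional Lorentzian metric and $\psi$ a smooth function such that the exact one-form $d\psi$ is a conformal Killing one-form of $\bar g$ which is null (i.e. $\bar g^{-1}(d\psi,d\psi)=0$). Then $\bar g$ is flat and, locally, there exist coordinates $(u,v)$ in which $\bar g=du\,dv$ and $\psi=v$.
   Context: A one-form $\omega$ on a pseudo-Riemannian manifold $(M,\bar g)$ is called a conformal Killing one-form if its metric dual vector field $X=\bar g^{-1}(\omega)$ is a conformal Killing vector field, i.e. $\mathcal{L}_X\bar g=\lambda\,\bar g$ for some function $\lambda$. *)

From Stdlib Require Import Reals List.
From Coquelicot Require Import Coquelicot.
Open Scope R_scope.

(* Local computations on an open subset of R^2 (a coordinate chart).
   Coordinates are indexed by bool: false = first coordinate, true = second. *)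
Definition pt := (R * R)%type.

Definition coord (p : pt) (i : bool) : R := if i then snd p else fst p.
Definition upd (p : pt) (i : bool) (t : R) : pt :=
  if i then (fst p, t) else (t, snd p).

Definition partial (i : bool) (f : pt -> R) (p : pt) : R :=
  Derive (fun t => f (upd p i t)) (coord p i).

Fixpoint dpart (w : list bool) (f : pt -> R) : pt -> R :=
  match w with
  | nil => f
  | i :: w' => partial i (dpart w' f)
  end.

Definition smooth_on (U : pt -> Prop) (f : pt -> R) : Prop :=
  forall (w : list bool) (p : pt), U p ->
    (forall i, ex_derive (fun t => dpart w f (upd p i t)) (coord p i)) /\
    continuous (dpart w f) p.

Definition sum2 (F : bool -> R) : R := F false + F true.

Definition metric := bool -> bool -> pt -> R.

Definition mdet (g : metric) (p : pt) : R :=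
  g false false p * g true true p - g false true p * g true false p.

Definition is_lorentzian_metric (U : pt -> Prop) (g : metric) : Prop :=
  (forall i j, smooth_on U (g i j)) /\
  (forall i j p, U p -> g i j p = g j i p) /\
  (forall p, U p -> mdet g p < 0).

(* inverse metric g^{ij} (2x2 inverse via the adjugate) *)
Definition ginv (g : metric) (i j : bool) (p : pt) : R :=
  (if Bool.eqb i j then g (negb i) (negb i) p else - g i j p) / mdet g p.

Definition grad (g : metric) (psi : pt -> R) (k : bool) (p : pt) : R :=
  sum2 (fun j => ginv g k j p * partial j psi p).

Definition lie_metric (g : metric) (X : bool -> pt -> R) (i j : bool) (p : pt) : R :=
  sum2 (fun k => X k p * partial k (g i j) p
               + g k j p * partial i (X k) p
               + g i k p * partial j (X k) p).

Definition conformal_killing_vf (U : pt -> Prop) (g : metric) (X : bool -> pt -> R) : Prop :=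
  exists lam : pt -> R, forall p, U p -> forall i j, lie_metric g X i j p = lam p * g i j p.

(* d psi is a conformal Killing one-form: its metric dual is conformal Killing *)
Definition dpsi_conformal_killing (U : pt -> Prop) (g : metric) (psi : pt -> R) : Prop :=
  conformal_killing_vf U g (grad g psi).

Definition dpsi_null (U : pt -> Prop) (g : metric) (psi : pt -> R) : Prop :=
  forall p, U p ->
    sum2 (fun i => sum2 (fun j => ginv g i j p * partial i psi p * partial j psi p)) = 0.

Definition dpsi_nonvanishing (U : pt -> Prop) (psi : pt -> R) : Prop :=
  forall p, U p -> exists i, partial i psi p <> 0.

Definition christoffel (g : metric) (k i j : bool) (p : pt) : R :=
  / 2 * sum2 (fun l => ginv g k l p *
      (partial i (g l j) p + partial j (g i l) p - partial l (g i j) p)).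

Definition riemann (g : metric) (l i j k : bool) (p : pt) : R :=
  partial j (christoffel g l i k) p - partial k (christoffel g l i j) p
  + sum2 (fun m => christoffel g l j m p * christoffel g m i k p
                 - christoffel g l k m p * christoffel g m i j p).

Definition flat_on (U : pt -> Prop) (g : metric) : Prop :=
  forall p, U p -> forall l i j k, riemann g l i j k p = 0.

(* g = du dv := (du (x) dv + dv (x) du)/2 on V *)
Definition metric_is_du_dv (V : pt -> Prop) (g : metric) (u v : pt -> R) : Prop :=
  forall p, V p -> forall i j,
    g i j p = / 2 * (partial i u p * partial j v p + partial j u p * partial i v p).

Definition coord_system (V : pt -> Prop) (u v : pt -> R) : Prop :=
  smooth_on V u /\ smooth_on V v /\
  (forall p q, V p -> V q -> u p = u q -> v p = v q -> p = q) /\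
  (forall p, V p ->
     partial false u p * partial true v p - partial true u p * partial false v p <> 0).

From Stdlib Require Import Reals List Lra.
From Coquelicot Require Import Coquelicot.
Open Scope R_scope.

(* Let X = grad psi.  One has L_X g = 2 Hess psi and, since g(X, d_k) = d_k psi,
   d_k g(X, X) = (L_X g)(X, d_k); as g(X, X) = 0 and L_X g = lam g, this gives
   lam d psi = 0, so lam = 0 and d psi is parallel.  The Ricci identity then says that
   R(., .) annihilates the nonzero covector d psi, which in dimension two, together with
   the skew-symmetry of R_{ij..}, forces R = 0.  Since d psi is null,
   g = (alpha (x) d psi + d psi (x) alpha) / 2 for a one-form alpha, which is closed
   because d psi is parallel; a primitive u of alpha (Poincare lemma on a box) and
   v = psi are then the required coordinates. *)

Definition box (p : pt) (r : R) (q : pt) : Prop :=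
  Rabs (fst q - fst p) < r /\ Rabs (snd q - snd p) < r.

Lemma locally_box (q : pt) (P : pt -> Prop) :
  locally q P -> exists d, 0 < d /\ forall z, box q d z -> P z.
Proof.
  intros [eps He]. exists eps. split; [apply cond_pos|].
  intros [z1 z2] [h1 h2]. apply He. destruct q. split; assumption.
Qed.

Lemma box_locally (q : pt) (d : R) (P : pt -> Prop) :
  0 < d -> (forall z, box q d z -> P z) -> locally q P.
Proof.
  intros Hd H. exists (mkposreal d Hd). intros [z1 z2] [h1 h2]. apply H. destruct q.
  split; assumption.
Qed.

Lemma box_of_open (U : pt -> Prop) (p : pt) :
  open U -> U p -> exists r, 0 < r /\ forall q, box p r q -> U q.
Proof. intros HU Hp. exact (locally_box p U (HU p Hp)). Qed.

Lemma box_in_box (p q : pt) (r : R) : box p r q ->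
  exists m, 0 < m /\ forall z, box q m z -> box p r z.
Proof.
  intros [h1 h2].
  exists (Rmin (r - Rabs (fst q - fst p)) (r - Rabs (snd q - snd p))). split.
  { apply Rmin_glb_lt; lra. }
  intros z [z1 z2].
  assert (m1 := Rmin_l (r - Rabs (fst q - fst p)) (r - Rabs (snd q - snd p))).
  assert (m2 := Rmin_r (r - Rabs (fst q - fst p)) (r - Rabs (snd q - snd p))).
  split.
  - replace (fst z - fst p) with ((fst z - fst q) + (fst q - fst p)) by ring.
    eapply Rle_lt_trans; [apply Rabs_triang | lra].
  - replace (snd z - snd p) with ((snd z - snd q) + (snd q - snd p)) by ring.
    eapply Rle_lt_trans; [apply Rabs_triang | lra].
Qed.

Lemma open_box (p : pt) (r : R) : open (box p r).
Proof.
  intros q Hq. destruct (box_in_box p q r Hq) as [m [Hm Sm]].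
  exact (box_locally q m _ Hm Sm).
Qed.

Lemma box_center (p : pt) (r : R) : 0 < r -> box p r p.
Proof. intros Hr. unfold box. rewrite !Rminus_eq_0, Rabs_R0. lra. Qed.

Lemma box_mono (p q : pt) (r r' : R) : r <= r' -> box p r q -> box p r' q.
Proof. intros Hr [h1 h2]. split; lra. Qed.

Lemma Rabs_between (a b c x0 r : R) :
  Rmin a b <= c <= Rmax a b -> Rabs (a - x0) < r -> Rabs (b - x0) < r ->
  Rabs (c - x0) < r /\ Rabs (c - a) <= Rabs (b - a).
Proof.
  intros [h1 h2] Ha Hb. apply Rabs_def2 in Ha. apply Rabs_def2 in Hb.
  unfold Rmin, Rmax in *. destruct (Rle_dec a b).
  - split; [apply Rabs_def1; lra | rewrite !Rabs_right; lra].
  - split; [apply Rabs_def1; lra | rewrite !Rabs_left1; lra].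
Qed.

Lemma upd_coord (p : pt) (i : bool) : upd p i (coord p i) = p.
Proof. destruct p; destruct i; reflexivity. Qed.

Lemma locally_line (U : pt -> Prop) (p : pt) (i : bool) :
  open U -> U p -> locally (coord p i) (fun t => U (upd p i t)).
Proof.
  intros HU Hp. destruct (box_of_open U p HU Hp) as [r [r0 Hr]].
  exists (mkposreal r r0). intros t Ht. apply Hr.
  change (Rabs (t - coord p i) < r) in Ht.
  destruct p as [p1 p2]; destruct i; unfold box; simpl in *;
    rewrite ?Rminus_eq_0, ?Rabs_R0; split; auto; lra.
Qed.

Lemma continuous_line0 (f : pt -> R) (x y : R) :
  continuous f (x, y) -> continuous (fun s => f (s, y)) x.
Proof.
  intros C. apply filterlim_locally. intros eps.
  destruct (locally_box _ _ (proj1 (filterlim_locally f (f (x, y))) C eps)) as [d [Hd Hb]].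
  exists (mkposreal d Hd). intros s Hs. apply Hb. split; simpl.
  - exact Hs.
  - rewrite Rminus_eq_0, Rabs_R0; auto.
Qed.

Lemma continuous_line1 (f : pt -> R) (x y : R) :
  continuous f (x, y) -> continuous (fun t => f (x, t)) y.
Proof.
  intros C. apply filterlim_locally. intros eps.
  destruct (locally_box _ _ (proj1 (filterlim_locally f (f (x, y))) C eps)) as [d [Hd Hb]].
  exists (mkposreal d Hd). intros t Ht. apply Hb. split; simpl.
  - rewrite Rminus_eq_0, Rabs_R0; auto.
  - exact Ht.
Qed.

Lemma continuity_2d_pt_of_continuous (h : pt -> R) (x y : R) :
  continuous h (x, y) -> continuity_2d_pt (fun u v => h (u, v)) x y.
Proof.
  intros C. apply continuity_2d_pt_filterlim. eapply filterlim_ext; [|exact C].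
  intros [a b]; reflexivity.
Qed.

Lemma continuous_locally_bounded (f : pt -> R) (q : pt) : continuous f q ->
  exists d, 0 < d /\ forall z, box q d z -> Rabs (f z) <= Rabs (f q) + 1.
Proof.
  intros C.
  destruct (locally_box _ _ (proj1 (filterlim_locally f (f q)) C (mkposreal 1 Rlt_0_1)))
    as [d [Hd Hb]].
  exists d. split; auto. intros z Hz. specialize (Hb z Hz).
  change (Rabs (f z - f q) < 1) in Hb.
  replace (f z) with ((f z - f q) + f q) by ring.
  eapply Rle_trans; [apply Rabs_triang | lra].
Qed.

Section MeanValue.
Variables (p : pt) (r : R) (f d0 d1 : pt -> R).
Hypothesis Hd0 : forall z, box p r z -> is_derive (fun s => f (s, snd z)) (fst z) (d0 z).
Hypothesis Hd1 : forall z, box p r z -> is_derive (fun t => f (fst z, t)) (snd z) (d1 z).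

(* Two one-variable mean value theorems, along the segments q -> (fst q, snd q') -> q'. *)
Lemma mvt_box (q q' : pt) : box p r q -> box p r q' ->
  exists s t, box p r (s, snd q') /\ box p r (fst q, t) /\
    Rabs (s - fst q) <= Rabs (fst q' - fst q) /\ Rabs (t - snd q) <= Rabs (snd q' - snd q) /\
    f q' - f q = d0 (s, snd q') * (fst q' - fst q) + d1 (fst q, t) * (snd q' - snd q).
Proof.
  destruct q as [x y], q' as [x' y']. intros [hx hy] [hx' hy']. simpl in *.
  assert (A0 : forall c, Rmin x x' <= c <= Rmax x x' ->
                 box p r (c, y') /\ Rabs (c - x) <= Rabs (x' - x)).
  { intros c Hc. destruct (Rabs_between x x' c (fst p) r Hc hx hx'). split; auto. split; auto. }
  assert (A1 : forall c, Rmin y y' <= c <= Rmax y y' ->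
                 box p r (x, c) /\ Rabs (c - y) <= Rabs (y' - y)).
  { intros c Hc. destruct (Rabs_between y y' c (snd p) r Hc hy hy'). split; auto. split; auto. }
  destruct (MVT_gen (fun s => f (s, y')) x x' (fun s => d0 (s, y'))) as [s [Hs Es]].
  { intros c Hc. apply (Hd0 (c, y')). apply A0. lra. }
  { intros c Hc. apply continuity_pt_filterlim, (ex_derive_continuous (fun s => f (s, y'))).
    eexists. apply (Hd0 (c, y')). apply A0. lra. }
  destruct (MVT_gen (fun t => f (x, t)) y y' (fun t => d1 (x, t))) as [t [Ht Et]].
  { intros c Hc. apply (Hd1 (x, c)). apply A1. lra. }
  { intros c Hc. apply continuity_pt_filterlim, (ex_derive_continuous (fun t => f (x, t))).
    eexists. apply (Hd1 (x, c)). apply A1. lra. }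
  destruct (A0 s Hs) as [B0 C0]. destruct (A1 t Ht) as [B1 C1].
  exists s, t. simpl. repeat split; try apply B0; try apply B1; auto.
  replace (f (x', y') - f (x, y)) with ((f (x', y') - f (x, y')) + (f (x, y') - f (x, y))) by ring.
  rewrite Es, Et. ring.
Qed.

Lemma continuous_of_partials (q : pt) :
  box p r q -> continuous d0 q -> continuous d1 q -> continuous f q.
Proof.
  intros Hq C0 C1.
  destruct (continuous_locally_bounded d0 q C0) as [e0 [He0 B0]].
  destruct (continuous_locally_bounded d1 q C1) as [e1 [He1 B1]].
  destruct (box_in_box p q r Hq) as [m [Hm Sm]].
  set (M := Rabs (d0 q) + Rabs (d1 q) + 1).
  assert (HM : 0 < M).
  { unfold M; pose proof (Rabs_pos (d0 q)); pose proof (Rabs_pos (d1 q)); lra. }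
  apply filterlim_locally. intros eps.
  assert (Heps := cond_pos eps).
  set (rho := Rmin (Rmin e0 e1) (Rmin m (eps / (4 * M)))).
  assert (Hrho : 0 < rho).
  { assert (0 < eps / (4 * M)) by (apply Rdiv_lt_0_compat; lra).
    unfold rho; repeat apply Rmin_glb_lt; auto. }
  assert (r0 : rho <= e0) by (unfold rho; eapply Rle_trans; [apply Rmin_l | apply Rmin_l]).
  assert (r1 : rho <= e1) by (unfold rho; eapply Rle_trans; [apply Rmin_l | apply Rmin_r]).
  assert (rm : rho <= m) by (unfold rho; eapply Rle_trans; [apply Rmin_r | apply Rmin_l]).
  assert (re : rho <= eps / (4 * M))
    by (unfold rho; eapply Rle_trans; [apply Rmin_r | apply Rmin_r]).
  apply (box_locally q rho); auto. intros z Hz.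
  assert (Hzp : box p r z) by (apply Sm; apply (box_mono q z rho m); auto).
  destruct (mvt_box q z Hq Hzp) as [s [t [_ [_ [Es [Et E]]]]]].
  change (Rabs (f z - f q) < eps). rewrite E.
  destruct Hz as [z1 z2].
  assert (D0 : Rabs (d0 (s, snd z)) <= M).
  { eapply Rle_trans; [apply B0; split; simpl; lra|].
    unfold M; pose proof (Rabs_pos (d1 q)); lra. }
  assert (D1 : Rabs (d1 (fst q, t)) <= M).
  { eapply Rle_trans; [apply B1; split; simpl; [rewrite Rminus_eq_0, Rabs_R0|]; lra|].
    unfold M; pose proof (Rabs_pos (d0 q)); lra. }
  assert (P0 : Rabs (d0 (s, snd z)) * Rabs (fst z - fst q) <= M * rho)
    by (apply Rmult_le_compat; try apply Rabs_pos; lra).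
  assert (P1 : Rabs (d1 (fst q, t)) * Rabs (snd z - snd q) <= M * rho)
    by (apply Rmult_le_compat; try apply Rabs_pos; lra).
  assert (P2 : M * rho <= M * (eps / (4 * M))) by (apply Rmult_le_compat_l; lra).
  replace (M * (eps / (4 * M))) with (eps / 4) in P2 by (field; lra).
  eapply Rle_lt_trans; [apply Rabs_triang|]. rewrite !Rabs_mult. lra.
Qed.

End MeanValue.

Lemma partial_ext_open (U : pt -> Prop) (f h : pt -> R) (i : bool) (p : pt) :
  open U -> U p -> (forall q, U q -> f q = h q) -> partial i f p = partial i h p.
Proof.
  intros HU Hp E. apply Derive_ext_loc.
  generalize (locally_line U p i HU Hp). apply filter_imp. intros t Ht. apply E; auto.
Qed.

Lemma dpart_ext_open (U : pt -> Prop) (f h : pt -> R) (w : list bool) :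
  open U -> (forall q, U q -> f q = h q) -> forall q, U q -> dpart w f q = dpart w h q.
Proof.
  intros HU E. induction w as [|i w IH]; intros q Hq; simpl; auto.
  apply partial_ext_open with U; auto.
Qed.

Lemma dpart_app (w w' : list bool) (f : pt -> R) : dpart (w ++ w') f = dpart w (dpart w' f).
Proof. induction w; simpl; congruence. Qed.

Lemma smooth_ext (U : pt -> Prop) (f h : pt -> R) :
  open U -> (forall q, U q -> f q = h q) -> smooth_on U f -> smooth_on U h.
Proof.
  intros HU E Hs w p Hp. destruct (Hs w p Hp) as [Hd Hc].
  assert (Ew : forall q, U q -> dpart w f q = dpart w h q) by (apply dpart_ext_open; auto).
  split.
  - intros i. apply ex_derive_ext_loc with (fun t => dpart w f (upd p i t)); auto.
    generalize (locally_line U p i HU Hp). apply filter_imp. auto.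
  - unfold continuous. rewrite <- (Ew p Hp).
    eapply filterlim_ext_loc; [|exact Hc].
    generalize (HU p Hp). apply filter_imp. auto.
Qed.

Lemma smooth_partial (U : pt -> Prop) (f : pt -> R) (i : bool) :
  smooth_on U f -> smooth_on U (partial i f).
Proof.
  intros Hs w p Hp. change (partial i f) with (dpart (i :: nil) f).
  rewrite <- dpart_app. apply Hs; auto.
Qed.

Lemma smooth_sub (U V : pt -> Prop) (f : pt -> R) :
  (forall q, V q -> U q) -> smooth_on U f -> smooth_on V f.
Proof. intros S Hs w p Hp. apply Hs; auto. Qed.

Lemma smooth_ex_derive (U : pt -> Prop) (f : pt -> R) (p : pt) (i : bool) :
  smooth_on U f -> U p -> ex_derive (fun t => f (upd p i t)) (coord p i).
Proof. intros Hs Hp. apply (Hs nil p Hp). Qed.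

Lemma smooth_continuous (U : pt -> Prop) (f : pt -> R) (p : pt) :
  smooth_on U f -> U p -> continuous f p.
Proof. intros Hs Hp. apply (Hs nil p Hp). Qed.

Lemma smooth_is_derive0 (U : pt -> Prop) (f : pt -> R) (z : pt) : smooth_on U f -> U z ->
  is_derive (fun s => f (s, snd z)) (fst z) (partial false f z).
Proof.
  destruct z as [x y]. intros Hs Hz. apply Derive_correct.
  exact (smooth_ex_derive U f (x, y) false Hs Hz).
Qed.

Lemma smooth_is_derive1 (U : pt -> Prop) (f : pt -> R) (z : pt) : smooth_on U f -> U z ->
  is_derive (fun t => f (fst z, t)) (snd z) (partial true f z).
Proof.
  destruct z as [x y]. intros Hs Hz. apply Derive_correct.
  exact (smooth_ex_derive U f (x, y) true Hs Hz).
Qed.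

Lemma partial_comm (U : pt -> Prop) (f : pt -> R) (p : pt) : open U -> smooth_on U f -> U p ->
  partial false (partial true f) p = partial true (partial false f) p.
Proof.
  intros HU Hs Hp. destruct (box_of_open U p HU Hp) as [r [r0 Hr]].
  assert (S0 := smooth_partial U f false Hs). assert (S1 := smooth_partial U f true Hs).
  destruct p as [x y].
  change (Derive (fun z => Derive (fun t => f (z, t)) y) x
          = Derive (fun z => Derive (fun t => f (t, z)) x) y).
  apply (Schwarz (fun a b => f (a, b))).
  - exists (mkposreal r r0). intros u v hu hv.
    assert (Uq : U (u, v)) by (apply Hr; split; auto).
    repeat split.
    + exact (smooth_ex_derive U f (u, v) false Hs Uq).
    + exact (smooth_ex_derive U f (u, v) true Hs Uq).
    + exact (smooth_ex_derive U _ (u, v) false S1 Uq).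
    + exact (smooth_ex_derive U _ (u, v) true S0 Uq).
  - apply (continuity_2d_pt_of_continuous (partial false (partial true f))).
    exact (smooth_continuous U _ _ (smooth_partial U _ false S1) Hp).
  - apply (continuity_2d_pt_of_continuous (partial true (partial false f))).
    exact (smooth_continuous U _ _ (smooth_partial U _ true S0) Hp).
Qed.

Definition is_partial (i : bool) (f : pt -> R) (p : pt) (d : R) : Prop :=
  is_derive (fun t => f (upd p i t)) (coord p i) d.

Lemma is_partial_unique (i : bool) (f : pt -> R) (p : pt) (d : R) :
  is_partial i f p d -> partial i f p = d.
Proof. apply is_derive_unique. Qed.

Lemma partial_correct (i : bool) (f : pt -> R) (p : pt) :
  ex_derive (fun t => f (upd p i t)) (coord p i) -> is_partial i f p (partial i f p).
Proof. apply Derive_correct. Qed.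

Lemma is_partial_const (i : bool) (p : pt) (c : R) : is_partial i (fun _ => c) p 0.
Proof. apply (is_derive_const c). Qed.

Lemma is_partial_plus (i : bool) (f h : pt -> R) (p : pt) (a b : R) :
  is_partial i f p a -> is_partial i h p b -> is_partial i (fun q => f q + h q) p (a + b).
Proof. intros Ha Hb. exact (is_derive_plus _ _ _ _ _ Ha Hb). Qed.

Lemma is_partial_opp (i : bool) (f : pt -> R) (p : pt) (a : R) :
  is_partial i f p a -> is_partial i (fun q => - f q) p (- a).
Proof. intros Ha. exact (is_derive_opp _ _ _ Ha). Qed.

Lemma is_partial_minus (i : bool) (f h : pt -> R) (p : pt) (a b : R) :
  is_partial i f p a -> is_partial i h p b -> is_partial i (fun q => f q - h q) p (a - b).
Proof. intros Ha Hb. exact (is_derive_minus _ _ _ _ _ Ha Hb). Qed.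

Lemma is_partial_mult (i : bool) (f h : pt -> R) (p : pt) (a b : R) :
  is_partial i f p a -> is_partial i h p b ->
  is_partial i (fun q => f q * h q) p (a * h p + f p * b).
Proof.
  intros Ha Hb. unfold is_partial in *.
  pose proof (is_derive_mult _ _ _ _ _ Ha Hb Rmult_comm) as H.
  cbv beta in H. rewrite upd_coord in H. exact H.
Qed.

Lemma is_partial_inv (i : bool) (f : pt -> R) (p : pt) (a : R) :
  is_partial i f p a -> f p <> 0 -> is_partial i (fun q => / f q) p (- a / f p ^ 2).
Proof.
  intros Ha Hn. unfold is_partial in *.
  assert (Hn' : f (upd p i (coord p i)) <> 0) by (rewrite upd_coord; auto).
  pose proof (is_derive_inv _ _ _ Ha Hn') as H. cbv beta in H. rewrite upd_coord in H. exact H.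
Qed.

Lemma is_partial_div (i : bool) (f h : pt -> R) (p : pt) (a b : R) :
  is_partial i f p a -> is_partial i h p b -> h p <> 0 ->
  is_partial i (fun q => f q / h q) p ((a * h p - f p * b) / h p ^ 2).
Proof.
  intros Ha Hb Hn.
  replace ((a * h p - f p * b) / h p ^ 2) with (a * / h p + f p * (- b / h p ^ 2))
    by (field; auto).
  apply (is_partial_mult i f (fun q => / h q) p); auto. apply is_partial_inv; auto.
Qed.

Inductive rat_smooth (U : pt -> Prop) : (pt -> R) -> Prop :=
| rat_smooth_base f : smooth_on U f -> rat_smooth U f
| rat_smooth_const c : rat_smooth U (fun _ => c)
| rat_smooth_plus f h : rat_smooth U f -> rat_smooth U h -> rat_smooth U (fun q => f q + h q)
| rat_smooth_mult f h : rat_smooth U f -> rat_smooth U h -> rat_smooth U (fun q => f q * h q)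
| rat_smooth_inv f : rat_smooth U f -> (forall q, U q -> f q <> 0) ->
    rat_smooth U (fun q => / f q)
| rat_smooth_ext f h : rat_smooth U h -> (forall q, U q -> f q = h q) -> rat_smooth U f.

Section RatSmooth.
Variable U : pt -> Prop.
Hypothesis HU : open U.

Lemma rat_smooth_minus (f h : pt -> R) :
  rat_smooth U f -> rat_smooth U h -> rat_smooth U (fun q => f q - h q).
Proof.
  intros Hf Hh. apply rat_smooth_ext with (fun q => f q + (-1) * h q); [|intros; ring].
  apply rat_smooth_plus, rat_smooth_mult; auto. apply rat_smooth_const.
Qed.

Lemma rat_smooth_opp (f : pt -> R) : rat_smooth U f -> rat_smooth U (fun q => - f q).
Proof.
  intros Hf. apply rat_smooth_ext with (fun q => (-1) * f q); [|intros; ring].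
  apply rat_smooth_mult; auto. apply rat_smooth_const.
Qed.

Lemma rat_smooth_div (f h : pt -> R) : rat_smooth U f -> rat_smooth U h ->
  (forall q, U q -> h q <> 0) -> rat_smooth U (fun q => f q / h q).
Proof. intros. apply rat_smooth_mult; auto. apply rat_smooth_inv; auto. Qed.

Lemma rat_smooth_local (f : pt -> R) : rat_smooth U f -> forall p, U p ->
  (forall i, ex_derive (fun t => f (upd p i t)) (coord p i)) /\ continuous f p.
Proof.
  induction 1 as [f Hs|c|f h _ IHf _ IHh|f h _ IHf _ IHh|f _ IHf Hn|f h _ IHh E];
    intros p Hp.
  - split; [intro i; apply smooth_ex_derive with U | apply smooth_continuous with U]; auto.
  - split; [intro i; apply ex_derive_const | apply continuous_const].
  - destruct (IHf p Hp) as [A1 A2], (IHh p Hp) as [B1 B2]. split.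
    + intro i. apply (ex_derive_plus _ _ _ (A1 i) (B1 i)).
    + apply (continuous_plus f h p A2 B2).
  - destruct (IHf p Hp) as [A1 A2], (IHh p Hp) as [B1 B2]. split.
    + intro i. apply (ex_derive_mult _ _ _ (A1 i) (B1 i)).
    + apply (@continuous_mult _ R_AbsRing f h p A2 B2).
  - destruct (IHf p Hp) as [A1 A2]. split.
    + intro i. destruct (A1 i) as [a Ha]. eexists. apply is_partial_inv; eauto.
    + apply continuous_comp with (g := fun x : R => / x); auto.
      apply continuous_Rinv; auto.
  - destruct (IHh p Hp) as [A1 A2]. split.
    + intro i. apply ex_derive_ext_loc with (fun t => h (upd p i t)); auto.
      generalize (locally_line U p i HU Hp). apply filter_imp. intros t Ht. symmetry; auto.
    + unfold continuous. rewrite (E p Hp).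
      eapply filterlim_ext_loc; [|exact A2].
      generalize (HU p Hp). apply filter_imp. intros; symmetry; auto.
Qed.

Lemma rat_smooth_is_partial (f : pt -> R) (i : bool) (p : pt) :
  rat_smooth U f -> U p -> is_partial i f p (partial i f p).
Proof. intros H Hp. apply partial_correct. apply (rat_smooth_local f H p Hp). Qed.

Lemma rat_smooth_partial (f : pt -> R) : rat_smooth U f -> forall i, rat_smooth U (partial i f).
Proof.
  induction 1 as [f Hs|c|f h Hf IHf Hh IHh|f h Hf IHf Hh IHh|f Hf IHf Hn|f h Hh IHh E];
    intros i.
  - apply rat_smooth_base, smooth_partial; auto.
  - apply rat_smooth_ext with (fun _ => 0); [apply rat_smooth_const|].
    intros q _. apply is_partial_unique, is_partial_const.
  - apply rat_smooth_ext with (fun q => partial i f q + partial i h q).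
    + apply rat_smooth_plus; auto.
    + intros q Hq. apply is_partial_unique, is_partial_plus; apply rat_smooth_is_partial; auto.
  - apply rat_smooth_ext with (fun q => partial i f q * h q + f q * partial i h q).
    + apply rat_smooth_plus; apply rat_smooth_mult; auto.
    + intros q Hq. apply is_partial_unique, is_partial_mult; apply rat_smooth_is_partial; auto.
  - apply rat_smooth_ext with (fun q => - partial i f q / (f q * f q)).
    + apply rat_smooth_div; [apply rat_smooth_opp; auto | apply rat_smooth_mult; auto |].
      intros q Hq. apply Rmult_integral_contrapositive_currified; auto.
    + intros q Hq. apply is_partial_unique.
      replace (- partial i f q / (f q * f q)) with (- partial i f q / f q ^ 2) by (simpl; field; auto).
      apply is_partial_inv; auto. apply rat_smooth_is_partial; auto.
  - apply rat_smooth_ext with (partial i h); auto.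
    intros q Hq. apply partial_ext_open with U; auto.
Qed.

Lemma rat_smooth_smooth (f : pt -> R) : rat_smooth U f -> smooth_on U f.
Proof.
  intros H w. assert (Hw : rat_smooth U (dpart w f)).
  { induction w; simpl; auto. apply rat_smooth_partial; auto. }
  intros p Hp. apply rat_smooth_local; auto.
Qed.

End RatSmooth.

Ltac is_partial_solve := cbv beta;
  lazymatch goal with
  | |- is_partial _ (fun q => @?A q + @?B q) _ _ =>
      eapply (is_partial_plus _ A B); [is_partial_solve | is_partial_solve]
  | |- is_partial _ (fun q => @?A q - @?B q) _ _ =>
      eapply (is_partial_minus _ A B); [is_partial_solve | is_partial_solve]
  | |- is_partial _ (fun q => @?A q * @?B q) _ _ =>
      eapply (is_partial_mult _ A B); [is_partial_solve | is_partial_solve]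
  | |- is_partial _ (fun q => @?A q / @?B q) _ _ =>
      eapply (is_partial_div _ A B); [is_partial_solve | is_partial_solve |]
  | |- is_partial _ (fun q => - @?A q) _ _ => eapply (is_partial_opp _ A); is_partial_solve
  | |- is_partial _ (fun q => / @?A q) _ _ => eapply (is_partial_inv _ A); [is_partial_solve |]
  | |- is_partial _ (fun q => ?F q) _ _ =>
      match goal with HH : open ?UU |- _ => eapply (rat_smooth_is_partial UU HH F) end
  | |- is_partial _ ?F _ _ => match F with fun _ => ?c => exact (is_partial_const _ _ c) end
  end.

Ltac rat_smooth_solve base := cbv beta;
  lazymatch goal with
  | |- rat_smooth _ (fun q => @?A q + @?B q) =>
      apply (rat_smooth_plus _ A B); [rat_smooth_solve base | rat_smooth_solve base]
  | |- rat_smooth _ (fun q => @?A q - @?B q) =>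
      apply (rat_smooth_minus _ A B); [rat_smooth_solve base | rat_smooth_solve base]
  | |- rat_smooth _ (fun q => @?A q * @?B q) =>
      apply (rat_smooth_mult _ A B); [rat_smooth_solve base | rat_smooth_solve base]
  | |- rat_smooth _ (fun q => @?A q / @?B q) =>
      apply (rat_smooth_div _ A B); [rat_smooth_solve base | rat_smooth_solve base |]
  | |- rat_smooth _ (fun q => - @?A q) => apply (rat_smooth_opp _ A); rat_smooth_solve base
  | |- rat_smooth _ (fun q => / @?A q) => apply (rat_smooth_inv _ A); [rat_smooth_solve base |]
  | |- rat_smooth _ (fun q => ?F q) => base
  | |- rat_smooth _ ?F => match F with fun _ => ?c => apply rat_smooth_const end
  end.

Section Poincare.
Variables (V : pt -> Prop) (a0 a1 : pt -> R) (p : pt) (r : R).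
Hypothesis Hbox : forall q, box p r q -> V q.
Hypothesis S0 : smooth_on V a0.
Hypothesis S1 : smooth_on V a1.
Hypothesis Hclosed : forall q, V q -> partial true a0 q = partial false a1 q.

(* The line integral of a0 dx + a1 dy along (fst p, snd p) -> (fst q, snd p) -> q. *)
Definition primitive (q : pt) : R :=
  RInt (fun s => a0 (s, snd p)) (fst p) (fst q) + RInt (fun t => a1 (fst q, t)) (snd p) (snd q).

Lemma box_segment0 (x y c : R) :
  box p r (x, y) -> Rmin (fst p) x <= c <= Rmax (fst p) x -> box p r (c, snd p).
Proof.
  intros [h1 h2] Hc. simpl in *.
  assert (H0 : forall a, Rabs (a - a) < r)
    by (intro a; rewrite Rminus_eq_0, Rabs_R0; apply Rle_lt_trans with (2 := h2), Rabs_pos).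
  destruct (Rabs_between (fst p) x c (fst p) r Hc (H0 _) h1). split; auto.
Qed.

Lemma box_segment1 (x y c : R) :
  box p r (x, y) -> Rmin (snd p) y <= c <= Rmax (snd p) y -> box p r (x, c).
Proof.
  intros [h1 h2] Hc. simpl in *.
  assert (H0 : Rabs (snd p - snd p) < r)
    by (rewrite Rminus_eq_0, Rabs_R0; apply Rle_lt_trans with (2 := h2), Rabs_pos).
  destruct (Rabs_between (snd p) y c (snd p) r Hc H0 h2). split; auto.
Qed.

Lemma continuous_a0_line (c y : R) : box p r (c, y) -> continuous (fun s => a0 (s, y)) c.
Proof. intros B. apply continuous_line0, (smooth_continuous V); auto. Qed.

Lemma continuous_a1_line (x c : R) : box p r (x, c) -> continuous (fun t => a1 (x, t)) c.
Proof. intros B. apply continuous_line1, (smooth_continuous V); auto. Qed.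

Lemma primitive_derive1 (q : pt) : box p r q -> is_derive (fun t => primitive (fst q, t)) (snd q) (a1 q).
Proof.
  destruct q as [x y]. intros Bq. unfold primitive; simpl.
  replace (a1 (x, y)) with (0 + a1 (x, y)) by ring.
  apply (is_derive_plus (fun _ => RInt (fun s => a0 (s, snd p)) (fst p) x)
                        (fun t => RInt (fun t0 => a1 (x, t0)) (snd p) t)).
  { exact (is_derive_const (K := R_AbsRing) _ _). }
  apply (is_derive_RInt (fun t0 => a1 (x, t0)) _ (snd p) y).
  - destruct (box_in_box p (x, y) r Bq) as [m [Hm Sm]].
    exists (mkposreal m Hm). intros b Hb.
    apply (RInt_correct (V := R_CompleteNormedModule)),
          (ex_RInt_continuous (V := R_CompleteNormedModule)).
    intros c Hc. apply continuous_a1_line, (box_segment1 x b); auto.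
    apply Sm. split; simpl; [rewrite Rminus_eq_0, Rabs_R0 |]; auto.
  - apply continuous_a1_line; auto.
Qed.

(* Differentiating under the integral sign, the closedness of the form turns the
   second term into a0 (x, y) - a0 (x, snd p). *)
Lemma primitive_derive0 (q : pt) : box p r q -> is_derive (fun s => primitive (s, snd q)) (fst q) (a0 q).
Proof.
  destruct q as [x y]. intros Bq. unfold primitive; simpl.
  destruct (box_in_box p (x, y) r Bq) as [m [Hm Sm]].
  assert (Bx : forall s, Rabs (s - x) < m -> box p r (s, y)).
  { intros s Hs. apply Sm. split; simpl; auto. rewrite Rminus_eq_0, Rabs_R0; auto. }
  assert (E : RInt (fun t => Derive (fun u => a1 (u, t)) x) (snd p) y = a0 (x, y) - a0 (x, snd p)).
  { rewrite (RInt_ext _ (Derive (fun t => a0 (x, t)))).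
    - apply (RInt_Derive (fun t => a0 (x, t))).
      + intros c Hc. exact (smooth_ex_derive V a0 (x, c) true S0 (Hbox _ (box_segment1 x y c Bq Hc))).
      + intros c Hc. apply (continuous_line1 (partial true a0) x c).
        apply (smooth_continuous V (partial true a0)); [apply smooth_partial; auto|].
        apply Hbox, (box_segment1 x y c Bq Hc).
    - intros c Hc. assert (Hc' : Rmin (snd p) y <= c <= Rmax (snd p) y) by lra.
      symmetry. change (partial true a0 (x, c) = partial false a1 (x, c)).
      apply Hclosed, Hbox, (box_segment1 x y c Bq Hc'). }
  replace (a0 (x, y)) with (a0 (x, snd p) + RInt (fun t => Derive (fun u => a1 (u, t)) x) (snd p) y)
    by (rewrite E; ring).
  apply (is_derive_plus (fun s => RInt (fun s0 => a0 (s0, snd p)) (fst p) s)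
                        (fun s => RInt (fun t0 => a1 (s, t0)) (snd p) y)).
  - apply (is_derive_RInt (fun s0 => a0 (s0, snd p)) _ (fst p) x).
    + exists (mkposreal m Hm). intros b Hb.
      apply (RInt_correct (V := R_CompleteNormedModule)),
            (ex_RInt_continuous (V := R_CompleteNormedModule)).
      intros c Hc. apply continuous_a0_line, (box_segment0 b y); auto.
    + apply continuous_a0_line, (box_segment0 x y); auto. split; [apply Rmin_r | apply Rmax_r].
  - apply (is_derive_RInt_param (fun s t => a1 (s, t)) (snd p) y x).
    + exists (mkposreal m Hm). intros s Hs t Ht.
      exact (smooth_ex_derive V a1 (s, t) false S1 (Hbox _ (box_segment1 s y t (Bx s Hs) Ht))).
    + intros t Ht. apply (continuity_2d_pt_of_continuous (partial false a1) x t).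
      apply (smooth_continuous V (partial false a1)); [apply smooth_partial; auto|].
      apply Hbox, (box_segment1 x y t Bq Ht).
    + exists (mkposreal m Hm). intros s Hs. apply (ex_RInt_continuous (V := R_CompleteNormedModule)).
      intros c Hc. apply continuous_a1_line, (box_segment1 s y c (Bx s Hs) Hc).
Qed.

Lemma partial_primitive0 (q : pt) : box p r q -> partial false primitive q = a0 q.
Proof. destruct q as [x y]. intros Bq. apply is_derive_unique, (primitive_derive0 (x, y) Bq). Qed.

Lemma partial_primitive1 (q : pt) : box p r q -> partial true primitive q = a1 q.
Proof. destruct q as [x y]. intros Bq. apply is_derive_unique, (primitive_derive1 (x, y) Bq). Qed.

Lemma primitive_smooth : smooth_on (box p r) primitive.
Proof.
  intros w q Bq. induction w as [|j w _] using rev_ind.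
  - split.
    + intros [|]; destruct q as [x y]; eexists;
        [exact (primitive_derive1 (x, y) Bq) | exact (primitive_derive0 (x, y) Bq)].
    + apply (continuous_of_partials p r primitive a0 a1 primitive_derive0 primitive_derive1 q Bq);
        apply (smooth_continuous V); auto.
  - rewrite dpart_app. simpl.
    assert (Sj : smooth_on (box p r) (partial j primitive)).
    { destruct j.
      - apply (smooth_ext (box p r) a1); [apply open_box | | apply (smooth_sub V); auto].
        intros z Bz. symmetry. apply partial_primitive1; auto.
      - apply (smooth_ext (box p r) a0); [apply open_box | | apply (smooth_sub V); auto].
        intros z Bz. symmetry. apply partial_primitive0; auto. }
    apply Sj; auto.
Qed.

End Poincare.

Lemma det_perturb (A B C D A' B' C' D' eps : R) :
  0 < eps <= 1 -> eps * (Rabs A + Rabs B + Rabs C + Rabs D + 2) * 2 <= Rabs (A * D - B * C) ->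
  A * D - B * C <> 0 ->
  Rabs (A' - A) < eps -> Rabs (B' - B) < eps -> Rabs (C' - C) < eps -> Rabs (D' - D) < eps ->
  A' * D' - B' * C' <> 0.
Proof.
  intros He Hb HD h1 h2 h3 h4 Z.
  set (e1 := A' - A) in *. set (e2 := B' - B) in *. set (e3 := C' - C) in *. set (e4 := D' - D) in *.
  assert (E : A * D - B * C = - (A * e4 + e1 * D + e1 * e4 - (B * e3 + e2 * C + e2 * e3))).
  { transitivity (A * D - B * C - (A' * D' - B' * C')); [rewrite Z; ring | unfold e1, e2, e3, e4; ring]. }
  assert (T : Rabs (A * e4 + e1 * D + e1 * e4 - (B * e3 + e2 * C + e2 * e3))
              <= Rabs A * Rabs e4 + Rabs e1 * Rabs D + Rabs e1 * Rabs e4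
                 + (Rabs B * Rabs e3 + Rabs e2 * Rabs C + Rabs e2 * Rabs e3)).
  { rewrite <- !Rabs_mult. unfold Rminus. eapply Rle_trans; [apply Rabs_triang|].
    rewrite Rabs_Ropp.
    pose proof (Rabs_triang (A * e4 + e1 * D) (e1 * e4)). pose proof (Rabs_triang (A * e4) (e1 * D)).
    pose proof (Rabs_triang (B * e3 + e2 * C) (e2 * e3)). pose proof (Rabs_triang (B * e3) (e2 * C)).
    lra. }
  assert (q1 : Rabs A * Rabs e4 <= Rabs A * eps) by (apply Rmult_le_compat_l; [apply Rabs_pos | lra]).
  assert (q2 : Rabs e1 * Rabs D <= eps * Rabs D) by (apply Rmult_le_compat_r; [apply Rabs_pos | lra]).
  assert (q3 : Rabs e1 * Rabs e4 <= eps * eps) by (apply Rmult_le_compat; try apply Rabs_pos; lra).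
  assert (q4 : Rabs B * Rabs e3 <= Rabs B * eps) by (apply Rmult_le_compat_l; [apply Rabs_pos | lra]).
  assert (q5 : Rabs e2 * Rabs C <= eps * Rabs C) by (apply Rmult_le_compat_r; [apply Rabs_pos | lra]).
  assert (q6 : Rabs e2 * Rabs e3 <= eps * eps) by (apply Rmult_le_compat; try apply Rabs_pos; lra).
  assert (q7 : eps * eps <= eps * 1) by (apply Rmult_le_compat_l; lra).
  assert (0 < Rabs (A * D - B * C)) by (apply Rabs_pos_lt; auto).
  assert (Rabs (A * D - B * C) <= eps * (Rabs A + Rabs B + Rabs C + Rabs D + 2))
    by (rewrite E, Rabs_Ropp; lra).
  lra.
Qed.

Lemma det_neq0_near (a b c d : pt -> R) (p : pt) :
  continuous a p -> continuous b p -> continuous c p -> continuous d p ->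
  a p * d p - b p * c p <> 0 ->
  exists r, 0 < r /\ forall z1 z2 z3 z4, box p r z1 -> box p r z2 -> box p r z3 -> box p r z4 ->
    a z1 * d z4 - b z2 * c z3 <> 0.
Proof.
  intros Ca Cb Cc Cd HD.
  set (K := Rabs (a p) + Rabs (b p) + Rabs (c p) + Rabs (d p) + 2).
  assert (HK : 0 < K).
  { unfold K; pose proof (Rabs_pos (a p)); pose proof (Rabs_pos (b p));
      pose proof (Rabs_pos (c p)); pose proof (Rabs_pos (d p)); lra. }
  assert (HDp : 0 < Rabs (a p * d p - b p * c p)) by (apply Rabs_pos_lt; auto).
  set (eps := Rmin 1 (Rabs (a p * d p - b p * c p) / (2 * K))).
  assert (He : 0 < eps <= 1).
  { split; [apply Rmin_glb_lt; [lra | apply Rdiv_lt_0_compat; lra] | apply Rmin_l]. }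
  assert (Heb : eps * K * 2 <= Rabs (a p * d p - b p * c p)).
  { assert (H : eps <= Rabs (a p * d p - b p * c p) / (2 * K)) by apply Rmin_r.
    apply (Rmult_le_compat_r (K * 2)) in H; [|lra].
    replace (Rabs (a p * d p - b p * c p) / (2 * K) * (K * 2))
      with (Rabs (a p * d p - b p * c p)) in H by (field; lra).
    lra. }
  assert (near : forall f : pt -> R, continuous f p -> locally p (fun z => Rabs (f z - f p) < eps)).
  { intros f Cf. exact (proj1 (filterlim_locally f (f p)) Cf (mkposreal eps (proj1 He))). }
  destruct (locally_box p _ (filter_and _ _ (filter_and _ _ (near a Ca) (near b Cb))
                                            (filter_and _ _ (near c Cc) (near d Cd))))
    as [r [Hr Hb]].
  exists r. split; auto. intros z1 z2 z3 z4 B1 B2 B3 B4.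
  apply (det_perturb (a p) (b p) (c p) (d p) _ _ _ _ eps He Heb HD).
  - apply (Hb z1 B1).
  - apply (Hb z2 B2).
  - apply (Hb z3 B3).
  - apply (Hb z4 B4).
Qed.

Lemma linear22_zero (A B C D x y : R) :
  A * D - B * C <> 0 -> A * x + B * y = 0 -> C * x + D * y = 0 -> x = 0 /\ y = 0.
Proof.
  intros HD e1 e2. split; apply (Rmult_eq_reg_r (A * D - B * C)); auto.
  - transitivity (D * (A * x + B * y) - B * (C * x + D * y)); [ring | rewrite e1, e2; ring].
  - transitivity (A * (C * x + D * y) - C * (A * x + B * y)); [ring | rewrite e1, e2; ring].
Qed.

(* The injectivity half of the inverse function theorem. *)
Lemma injective_near (V : pt -> Prop) (u v : pt -> R) (p : pt) :
  open V -> V p -> smooth_on V u -> smooth_on V v ->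
  partial false u p * partial true v p - partial true u p * partial false v p <> 0 ->
  exists r, 0 < r /\ (forall q, box p r q -> V q) /\
    forall q q', box p r q -> box p r q' -> u q = u q' -> v q = v q' -> q = q'.
Proof.
  intros HV Vp Su Sv HJ.
  assert (C : forall f i, smooth_on V f -> continuous (partial i f) p)
    by (intros f i Sf; exact (smooth_continuous V _ p (smooth_partial V f i Sf) Vp)).
  destruct (det_neq0_near (partial false u) (partial true u) (partial false v) (partial true v) p
              (C u false Su) (C u true Su) (C v false Sv) (C v true Sv) HJ) as [d [Hd Hdet]].
  destruct (box_of_open V p HV Vp) as [r [Hr Hbox]].
  set (r' := Rmin r d).
  assert (Hsub : forall q, box p r' q -> V q /\ box p d q).
  { intros q Bq. split; [apply Hbox|]; apply (box_mono p q r'); auto; unfold r';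
      [apply Rmin_l | apply Rmin_r]. }
  exists r'. split; [apply Rmin_glb_lt; auto|]. split; [intros q Bq; apply Hsub; auto|].
  intros q q' Bq Bq' Eu Ev.
  assert (D : forall f, smooth_on V f ->
     (forall z, box p r' z -> is_derive (fun s => f (s, snd z)) (fst z) (partial false f z)) /\
     (forall z, box p r' z -> is_derive (fun t => f (fst z, t)) (snd z) (partial true f z))).
  { intros f Sf; split; intros z Bz;
      [apply smooth_is_derive0 with V | apply smooth_is_derive1 with V]; auto; apply Hsub; auto. }
  destruct (D u Su) as [Du0 Du1], (D v Sv) as [Dv0 Dv1].
  destruct (mvt_box p r' u _ _ Du0 Du1 q q' Bq Bq') as [s [t [Bs [Bt [_ [_ Eu']]]]]].
  destruct (mvt_box p r' v _ _ Dv0 Dv1 q q' Bq Bq') as [s' [t' [Bs' [Bt' [_ [_ Ev']]]]]].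
  rewrite Eu, Rminus_eq_0 in Eu'. rewrite Ev, Rminus_eq_0 in Ev'.
  destruct (linear22_zero _ _ _ _ (fst q' - fst q) (snd q' - snd q)
              (Hdet _ _ _ _ (proj2 (Hsub _ Bs)) (proj2 (Hsub _ Bt))
                            (proj2 (Hsub _ Bs')) (proj2 (Hsub _ Bt')))) as [Ex Ey]; try lra.
  destruct q as [x y], q' as [x' y']. simpl in *. f_equal; lra.
Qed.

Lemma open_neq0 (U : pt -> Prop) (f : pt -> R) :
  open U -> (forall q, U q -> continuous f q) -> open (fun q => U q /\ f q <> 0).
Proof.
  intros HU Cf q [Uq Hq]. apply filter_and; [exact (HU q Uq)|].
  exact (Cf q Uq _ (open_neq 0 (f q) Hq)).
Qed.

(* In two dimensions: if g r is skew (r = (R^n_j01)) and a nonzero b satisfies b r = 0,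
   then g r = c J with J the rotation by a right angle, so b adj(g) J c = 0 forces c = 0. *)
Lemma skew_lowered_kernel_zero (g00 g01 g11 b0 b1 r00 r01 r10 r11 : R) :
  g00 * g11 - g01 * g01 <> 0 -> (b0 <> 0 \/ b1 <> 0) ->
  g00 * r00 + g01 * r10 = 0 ->
  g01 * r01 + g11 * r11 = 0 ->
  (g00 * r01 + g01 * r11) + (g01 * r00 + g11 * r10) = 0 ->
  b0 * r00 + b1 * r10 = 0 ->
  b0 * r01 + b1 * r11 = 0 ->
  r00 = 0 /\ r01 = 0 /\ r10 = 0 /\ r11 = 0.
Proof.
  intros HD Hb e00 e11 e01 b0e b1e.
  set (D := g00 * g11 - g01 * g01) in *.
  set (c := g00 * r01 + g01 * r11).
  assert (E1 : r00 * D = g01 * c).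
  { transitivity (g11 * (g00 * r00 + g01 * r10)
      - g01 * ((g00 * r01 + g01 * r11) + (g01 * r00 + g11 * r10)) + g01 * c);
      [unfold D, c; ring | rewrite e00, e01; ring]. }
  assert (E2 : r10 * D = - g00 * c).
  { transitivity (- g01 * (g00 * r00 + g01 * r10)
      + g00 * ((g00 * r01 + g01 * r11) + (g01 * r00 + g11 * r10)) - g00 * c);
      [unfold D, c; ring | rewrite e00, e01; ring]. }
  assert (E3 : r01 * D = g11 * c).
  { transitivity (g11 * c - g01 * (g01 * r01 + g11 * r11)); [unfold D, c; ring | rewrite e11; ring]. }
  assert (E4 : r11 * D = - g01 * c).
  { transitivity (- g01 * c + g00 * (g01 * r01 + g11 * r11)); [unfold D, c; ring | rewrite e11; ring]. }
  assert (Hc : c = 0).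
  { destruct (Req_dec c 0) as [|Hc]; auto. exfalso.
    assert (HcD : c * D <> 0) by (apply Rmult_integral_contrapositive_currified; auto).
    assert (F0 : b0 * g01 - b1 * g00 = 0).
    { apply (Rmult_eq_reg_l (c * D)); auto.
      transitivity (D * (b0 * (r00 * D) + b1 * (r10 * D))); [rewrite E1, E2; ring|].
      transitivity (D * D * (b0 * r00 + b1 * r10)); [ring | rewrite b0e; ring]. }
    assert (F1 : b0 * g11 - b1 * g01 = 0).
    { apply (Rmult_eq_reg_l (c * D)); auto.
      transitivity (D * (b0 * (r01 * D) + b1 * (r11 * D))); [rewrite E3, E4; ring|].
      transitivity (D * D * (b0 * r01 + b1 * r11)); [ring | rewrite b1e; ring]. }
    destruct (linear22_zero g01 (- g00) g11 (- g01) b0 b1) as [Z0 Z1];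
      [unfold D in HD; intro Z; apply HD; lra | lra | lra |].
    destruct Hb; contradiction. }
  rewrite Hc in E1, E2, E3, E4.
  repeat split; apply (Rmult_eq_reg_r D); auto; [rewrite E1 | rewrite E3 | rewrite E2 | rewrite E4]; ring.
Qed.

Section Lorentzian.
Variables (U : pt -> Prop) (g : metric) (psi : pt -> R).
Hypothesis HU : open U.
Hypothesis Hgs : forall i j, smooth_on U (g i j).
Hypothesis Hsym : forall i j p, U p -> g i j p = g j i p.
Hypothesis Hdet : forall p, U p -> mdet g p < 0.
Hypothesis Hpsi : smooth_on U psi.

Lemma mdet_neq0 (p : pt) : U p -> mdet g p <> 0.
Proof. intro Up. specialize (Hdet p Up). lra. Qed.

Lemma mdet_sym_neq0 (p : pt) : U p ->
  g false false p * g true true p - g false true p * g false true p <> 0.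
Proof. intro Up. rewrite (Hsym false true p Up) at 2. exact (mdet_neq0 p Up). Qed.

Lemma rat_smooth_g (i j : bool) : rat_smooth U (g i j).
Proof. apply rat_smooth_base; auto. Qed.

Lemma rat_smooth_psi : rat_smooth U psi.
Proof. apply rat_smooth_base; auto. Qed.

Lemma rat_smooth_mdet : rat_smooth U (mdet g).
Proof. unfold mdet. rat_smooth_solve ltac:(apply rat_smooth_g). Qed.

Lemma rat_smooth_christoffel (m i j : bool) : rat_smooth U (christoffel g m i j).
Proof.
  destruct m, i, j; unfold christoffel, ginv, sum2; cbn [Bool.eqb negb];
    rat_smooth_solve ltac:(repeat apply (rat_smooth_partial U HU);
                           first [apply rat_smooth_g | apply rat_smooth_mdet]);
    intros q Uq; first [apply mdet_neq0; auto | lra].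
Qed.

Definition dpsi_norm (q : pt) : R :=
  sum2 (fun i => sum2 (fun j => ginv g i j q * partial i psi q * partial j psi q)).

(* Gamma^m_ij d_m psi: the Hessian of psi is d_i d_j psi minus this. *)
Definition christoffel_dpsi (i j : bool) (q : pt) : R :=
  sum2 (fun m => christoffel g m i j q * partial m psi q).

(* By metric compatibility, d_k g_ij equals this. *)
Definition christoffel_lowered (k i j : bool) (q : pt) : R :=
  sum2 (fun n => g i n q * christoffel g n k j q + g j n q * christoffel g n k i q).

Ltac smooth_atom :=
  repeat apply (rat_smooth_partial U HU);
  first [apply rat_smooth_g | apply rat_smooth_psi | apply rat_smooth_mdet
        | apply rat_smooth_christoffel].

Ltac side_goal :=
  first [ smooth_atom | assumption | apply mdet_neq0; assumption
        | apply Rmult_integral_contrapositive_currified; assumption ].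

Ltac partial_compute_by unfolder F :=
  let H := fresh in
  match goal with |- context [partial ?i F ?p] =>
    eassert (H : is_partial i F p _);
    [ unfolder; cbn [Bool.eqb negb]; is_partial_solve; side_goal
    | rewrite (is_partial_unique _ _ _ _ H); clear H ]
  end.

Ltac partial_compute F :=
  partial_compute_by
    ltac:(unfold christoffel_dpsi, christoffel_lowered, dpsi_norm, grad, ginv, sum2, mdet) F.

Ltac partial_compute_grad :=
  repeat match goal with
  | |- context [partial ?i (grad g psi ?k) ?p] => partial_compute (grad g psi k)
  | |- context [partial ?i dpsi_norm ?p] => partial_compute dpsi_norm
  end.

Lemma partial_g_sym (p : pt) (k i j : bool) : U p -> partial k (g i j) p = partial k (g j i) p.
Proof. intros Up. apply partial_ext_open with U; auto. Qed.

Lemma partial_psi_comm (p : pt) : U p ->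
  partial true (partial false psi) p = partial false (partial true psi) p.
Proof. intros Up. symmetry. apply partial_comm with U; auto. Qed.

Ltac sym_normalize p Up :=
  repeat first [ rewrite (Hsym true false p Up) | rewrite (partial_g_sym p _ true false Up)
               | rewrite (partial_psi_comm p Up) ].

Lemma lie_grad_hessian (p : pt) (i j : bool) : U p ->
  lie_metric g (grad g psi) i j p = 2 * (partial i (partial j psi) p - christoffel_dpsi i j p).
Proof.
  intros Up. assert (Hd := mdet_sym_neq0 p Up).
  unfold lie_metric, sum2. cbv beta.
  destruct i, j; partial_compute_grad;
    unfold christoffel_dpsi, christoffel, grad, ginv, sum2, mdet; cbn [Bool.eqb negb];
    sym_normalize p Up; field; exact Hd.
Qed.

(* d_k g(X, X) = 2 Hess psi (X, d_k) together with g(X, d_k) = d_k psi. *)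
Lemma conformal_factor_dpsi (p : pt) (lam : R) (k : bool) : U p ->
  lam * partial k psi p = partial k dpsi_norm p -
   (grad g psi false p * (lie_metric g (grad g psi) k false p - lam * g k false p) +
    grad g psi true p * (lie_metric g (grad g psi) k true p - lam * g k true p)).
Proof.
  intros Up. assert (Hd := mdet_sym_neq0 p Up).
  unfold lie_metric, sum2. cbv beta.
  destruct k; partial_compute_grad; unfold grad, ginv, sum2, mdet; cbn [Bool.eqb negb];
    sym_normalize p Up; field; exact Hd.
Qed.

Lemma dpsi_parallel :
  dpsi_nonvanishing U psi -> dpsi_conformal_killing U g psi -> dpsi_null U g psi ->
  forall q, U q -> forall i j, partial i (partial j psi) q = christoffel_dpsi i j q.
Proof.
  intros Hnv [lam Hlam] HN q Uq i j.
  assert (Hlam0 : lam q = 0).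
  { destruct (Hnv q Uq) as [k Hk].
    assert (dN : partial k dpsi_norm q = 0).
    { rewrite (partial_ext_open U dpsi_norm (fun _ => 0) k q HU Uq HN).
      apply is_partial_unique, is_partial_const. }
    assert (E := conformal_factor_dpsi q (lam q) k Uq). rewrite dN, !(Hlam q Uq) in E.
    assert (Z : lam q * partial k psi q = 0) by (rewrite E; ring).
    destruct (Rmult_integral _ _ Z); [auto | contradiction]. }
  specialize (Hlam q Uq i j). rewrite Hlam0, lie_grad_hessian in Hlam; auto. lra.
Qed.

Lemma christoffel_sym (q : pt) (m : bool) : U q ->
  christoffel g m true false q = christoffel g m false true q.
Proof. intros Uq. unfold christoffel, sum2. destruct m; sym_normalize q Uq; ring. Qed.

Lemma partial_christoffel_sym (p : pt) (k m : bool) : U p ->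
  partial k (christoffel g m true false) p = partial k (christoffel g m false true) p.
Proof. intros Up. apply partial_ext_open with U; auto. intros; apply christoffel_sym; auto. Qed.

Ltac christoffel_normalize p Up :=
  repeat first [ rewrite (christoffel_sym p _ Up) | rewrite (partial_christoffel_sym p _ _ Up) ].

Lemma partial_metric (q : pt) (k i j : bool) : U q -> partial k (g i j) q = christoffel_lowered k i j q.
Proof.
  intros Uq. assert (Hd := mdet_sym_neq0 q Uq).
  unfold christoffel_lowered, christoffel, ginv, sum2, mdet; destruct k, i, j; cbn [Bool.eqb negb];
    sym_normalize q Uq; field; exact Hd.
Qed.

(* Commuting the derivatives d_0 d_1 of g_ij and expanding with partial_metric. *)
Lemma riemann_lowered_antisym (p : pt) (i j : bool) : U p ->
  sum2 (fun n => g i n p * riemann g n j false true p + g j n p * riemann g n i false true p) = 0.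
Proof.
  intros Up.
  assert (T := partial_comm U (g i j) p HU (Hgs i j) Up).
  rewrite (partial_ext_open U (partial true (g i j)) (christoffel_lowered true i j) false p HU Up) in T
    by (intros; apply partial_metric; auto).
  rewrite (partial_ext_open U (partial false (g i j)) (christoffel_lowered false i j) true p HU Up) in T
    by (intros; apply partial_metric; auto).
  revert T. partial_compute (christoffel_lowered true i j).
  partial_compute (christoffel_lowered false i j).
  rewrite !(partial_metric p _ _ _ Up). unfold christoffel_lowered, riemann, sum2. cbv beta.
  destruct i, j; sym_normalize p Up; christoffel_normalize p Up; intro T; lra.
Qed.

Section Parallel.
Hypothesis Hparallel : forall q, U q -> forall i j, partial i (partial j psi) q = christoffel_dpsi i j q.

(* The Ricci identity for the parallel covector d psi. *)
Lemma riemann_dpsi (p : pt) (j : bool) : U p ->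
  sum2 (fun n => partial n psi p * riemann g n j false true p) = 0.
Proof.
  intros Up.
  assert (T := partial_comm U (partial j psi) p HU (smooth_partial U psi j Hpsi) Up).
  rewrite (partial_ext_open U (partial true (partial j psi)) (christoffel_dpsi true j) false p HU Up) in T
    by (intros; apply Hparallel; auto).
  rewrite (partial_ext_open U (partial false (partial j psi)) (christoffel_dpsi false j) true p HU Up) in T
    by (intros; apply Hparallel; auto).
  revert T. partial_compute (christoffel_dpsi true j). partial_compute (christoffel_dpsi false j).
  rewrite !(Hparallel p Up). unfold christoffel_dpsi, riemann, sum2. cbv beta. intro T.
  destruct j; christoffel_normalize p Up; revert T; christoffel_normalize p Up; intro T; lra.
Qed.

Lemma flat_of_parallel (p : pt) : U p -> (exists i, partial i psi p <> 0) ->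
  forall l i j k, riemann g l i j k p = 0.
Proof.
  intros Up Hnv. assert (Hd := mdet_sym_neq0 p Up).
  assert (e00 := riemann_lowered_antisym p false false Up).
  assert (e11 := riemann_lowered_antisym p true true Up).
  assert (e01 := riemann_lowered_antisym p false true Up).
  assert (b0 := riemann_dpsi p false Up).
  assert (b1 := riemann_dpsi p true Up).
  unfold sum2 in e00, e11, e01, b0, b1. rewrite (Hsym true false p Up) in e11, e01.
  destruct (skew_lowered_kernel_zero (g false false p) (g false true p) (g true true p)
              (partial false psi p) (partial true psi p)
              (riemann g false false false true p) (riemann g false true false true p)
              (riemann g true false false true p) (riemann g true true false true p))
    as [r00 [r01 [r10 r11]]]; try lra.
  { destruct Hnv as [[|] Hi]; auto. }
  intros l i j k. destruct j, k.
  - unfold riemann, sum2; ring.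
  - assert (E : riemann g l i true false p = - riemann g l i false true p)
      by (unfold riemann, sum2; ring).
    rewrite E. destruct l, i; rewrite ?r00, ?r01, ?r10, ?r11; ring.
  - destruct l, i; auto.
  - unfold riemann, sum2; ring.
Qed.


Section Null.
Hypothesis HN : forall q, U q -> dpsi_norm q = 0.

Lemma null_dpsi_eq (c : bool) (q : pt) : U q ->
  g (negb c) (negb c) q * partial c psi q * partial c psi q
  - 2 * g c (negb c) q * partial c psi q * partial (negb c) psi q
  + g c c q * partial (negb c) psi q * partial (negb c) psi q = 0.
Proof.
  intros Uq. assert (Hd := mdet_sym_neq0 q Uq).
  transitivity (dpsi_norm q * (g false false q * g true true q - g false true q * g false true q)).
  - destruct c; unfold dpsi_norm, ginv, sum2, mdet; cbn [Bool.eqb negb]; sym_normalize q Uq;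
      field; exact Hd.
  - rewrite HN; [ring | auto].
Qed.

(* Solving g = (alpha (x) dpsi + dpsi (x) alpha) / 2 for alpha, using d_c psi <> 0. *)
Definition alpha (c i : bool) (q : pt) : R :=
  if Bool.eqb i c then g c c q / partial c psi q
  else (2 * g c (negb c) q * partial c psi q - g c c q * partial (negb c) psi q)
       / (partial c psi q * partial c psi q).

(* With d_c psi <> 0, the null condition determines g_{c'c'} (c' = negb c), and the
   Lorentzian condition becomes k <> 0, where k parametrizes g_{cc'}. *)
Lemma null_metric_components (c : bool) (q : pt) : U q -> partial c psi q <> 0 ->
  exists k, k <> 0 /\
    g (negb c) (negb c) q =
      (2 * g c (negb c) q * partial c psi q * partial (negb c) psi q
       - g c c q * partial (negb c) psi q * partial (negb c) psi q)
      / (partial c psi q * partial c psi q) /\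
    g c (negb c) q = (g c c q * partial (negb c) psi q - k) / partial c psi q.
Proof.
  intros Uq Hc. assert (Hn := null_dpsi_eq c q Uq).
  assert (Hcc : partial c psi q * partial c psi q <> 0)
    by (apply Rmult_integral_contrapositive_currified; auto).
  assert (Hd : g c c q * g (negb c) (negb c) q - g c (negb c) q * g c (negb c) q <> 0).
  { assert (Hd := mdet_sym_neq0 q Uq).
    destruct c; cbn [negb]; sym_normalize q Uq; intro Z; apply Hd; lra. }
  assert (Hgnn : g (negb c) (negb c) q =
    (2 * g c (negb c) q * partial c psi q * partial (negb c) psi q
     - g c c q * partial (negb c) psi q * partial (negb c) psi q) / (partial c psi q * partial c psi q)).
  { apply (Rmult_eq_reg_r (partial c psi q * partial c psi q)); auto. field_simplify; [lra | auto]. }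
  set (k := g c c q * partial (negb c) psi q - g c (negb c) q * partial c psi q).
  exists k. split; [|split; [exact Hgnn | unfold k; field; auto]].
  intro Z. apply Hd. apply (Rmult_eq_reg_r (partial c psi q * partial c psi q)); auto.
  transitivity (- (k * k)); [rewrite Hgnn; unfold k; field; auto | rewrite Z; ring].
Qed.

Lemma alpha_closed (c : bool) (q : pt) : U q -> partial c psi q <> 0 ->
  partial true (alpha c false) q = partial false (alpha c true) q.
Proof.
  intros Uq Hc.
  destruct (null_metric_components c q Uq Hc) as [k [Hk [Hgnn Hgcn]]].
  assert (side : forall P : R, P = - (k * k) -> P <> 0).
  { intros P E Z. apply Hk. rewrite E in Z. assert (KK : k * k = 0) by lra.
    destruct (Rmult_integral _ _ KK); auto. }
  destruct c; cbn [negb] in *; rewrite ?(Hsym true false q Uq) in Hgnn, Hgcn;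
    repeat match goal with |- context [partial ?i (alpha ?c ?j) ?p] =>
      partial_compute_by ltac:(unfold alpha) (alpha c j) end;
    rewrite !(Hparallel q Uq); unfold christoffel_dpsi, christoffel, ginv, sum2, mdet;
    cbn [Bool.eqb negb]; sym_normalize q Uq; rewrite Hgnn, Hgcn;
    (field; split; [auto | apply side; ring]).
Qed.

Lemma metric_alpha_dpsi (c : bool) (q : pt) (i j : bool) : U q -> partial c psi q <> 0 ->
  g i j q = / 2 * (alpha c i q * partial j psi q + alpha c j q * partial i psi q).
Proof.
  intros Uq Hc.
  destruct (null_metric_components c q Uq Hc) as [k [Hk [Hgnn Hgcn]]].
  destruct c; cbn [negb] in *; rewrite ?(Hsym true false q Uq) in Hgnn, Hgcn;
    unfold alpha; destruct i, j; cbn [Bool.eqb negb]; sym_normalize q Uq;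
    try rewrite Hgnn; rewrite ?Hgcn; field; auto.
Qed.

Lemma alpha_dpsi_det_neq0 (c : bool) (q : pt) : U q -> partial c psi q <> 0 ->
  alpha c false q * partial true psi q - alpha c true q * partial false psi q <> 0.
Proof.
  intros Uq Hc.
  destruct (null_metric_components c q Uq Hc) as [k [Hk [_ Hgcn]]].
  intro Z. apply Hk.
  assert (E : (alpha c false q * partial true psi q - alpha c true q * partial false psi q)
              * partial c psi q = (if c then -2 else 2) * k).
  { destruct c; cbn [negb] in *; rewrite ?(Hsym true false q Uq) in Hgcn;
      unfold alpha; cbn [Bool.eqb negb]; sym_normalize q Uq; rewrite Hgcn; field; auto. }
  rewrite Z, Rmult_0_l in E. destruct c; lra.
Qed.

Lemma open_partial_psi_neq0 (c : bool) : open (fun q => U q /\ partial c psi q <> 0).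
Proof.
  apply open_neq0; auto. intros q Uq. apply (smooth_continuous U); auto. apply smooth_partial; auto.
Qed.

Lemma alpha_smooth (c i : bool) : smooth_on (fun q => U q /\ partial c psi q <> 0) (alpha c i).
Proof.
  set (W := fun q => U q /\ partial c psi q <> 0).
  assert (HW : open W) by apply open_partial_psi_neq0.
  apply (rat_smooth_smooth W HW).
  assert (Hg : forall a b, rat_smooth W (g a b))
    by (intros; apply rat_smooth_base, (smooth_sub U); [intros q []|]; auto).
  assert (Hp : forall a, rat_smooth W (partial a psi))
    by (intros; apply rat_smooth_base, (smooth_sub U), smooth_partial; [intros q []|]; auto).
  destruct c, i; unfold alpha; cbn [Bool.eqb negb];
    rat_smooth_solve ltac:(first [apply Hg | apply Hp]); intros q [Uq Hq]; auto;
    apply Rmult_integral_contrapositive_currified; auto.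
Qed.

(* u is a primitive of the closed form alpha; the coordinates are (u, psi). *)
Lemma null_coordinates (p : pt) : U p -> (exists c, partial c psi p <> 0) ->
  exists (V : pt -> Prop) (u v : pt -> R),
    open V /\ V p /\ (forall q, V q -> U q) /\
    coord_system V u v /\ metric_is_du_dv V g u v /\ (forall q, V q -> psi q = v q).
Proof.
  intros Up [c Hc].
  set (W := fun q => U q /\ partial c psi q <> 0).
  assert (HW : open W) by apply open_partial_psi_neq0.
  destruct (box_of_open W p HW (conj Up Hc)) as [r [Hr Hbox]].
  assert (Hclosed : forall q, W q -> partial true (alpha c false) q = partial false (alpha c true) q)
    by (intros q [Uq Hq]; apply alpha_closed; auto).
  set (u := primitive (alpha c false) (alpha c true) p).
  assert (Su : smooth_on (box p r) u) by (apply (primitive_smooth W); auto; apply alpha_smooth).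
  assert (Du : forall q, box p r q -> partial false u q = alpha c false q /\ partial true u q = alpha c true q).
  { intros q Bq. split; [apply (partial_primitive0 W _ _ p r) | apply (partial_primitive1 W _ _ p r)];
      auto; apply alpha_smooth. }
  assert (Spsi : smooth_on (box p r) psi) by (apply (smooth_sub U); auto; intros q Bq; apply Hbox; auto).
  destruct (injective_near (box p r) u psi p (open_box p r) (box_center p r Hr) Su Spsi)
    as [r' [Hr' [Hsub Hinj]]].
  { destruct (Du p (box_center p r Hr)) as [-> ->]. apply alpha_dpsi_det_neq0; auto. }
  assert (Hsub' : forall q, box p r' q -> W q) by auto.
  exists (box p r'), u, psi.
  split; [apply open_box|]. split; [apply box_center; auto|].
  split; [intros q Bq; apply Hsub'; auto|].
  split; [split; [|split; [|split]] | split; [|reflexivity]].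
  - apply (smooth_sub (box p r)); auto.
  - apply (smooth_sub (box p r)); auto.
  - intros q q' Bq Bq'. apply Hinj; auto.
  - intros q Bq. destruct (Du q (Hsub q Bq)) as [-> ->].
    destruct (Hsub' q Bq) as [Uq Hq]. apply alpha_dpsi_det_neq0; auto.
  - intros q Bq i j. destruct (Du q (Hsub q Bq)) as [E0 E1].
    destruct (Hsub' q Bq) as [Uq Hq].
    rewrite (metric_alpha_dpsi c q i j Uq Hq).
    destruct i, j; rewrite ?E0, ?E1; reflexivity.
Qed.

End Null.
End Parallel.
End Lorentzian.

Theorem lemma1 (U : pt -> Prop) (g : metric) (psi : pt -> R) :
  open U ->
  is_lorentzian_metric U g ->
  smooth_on U psi ->
  dpsi_nonvanishing U psi ->
  dpsi_conformal_killing U g psi ->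
  dpsi_null U g psi ->
  flat_on U g /\
  (forall p, U p ->
     exists (V : pt -> Prop) (u v : pt -> R),
       open V /\ V p /\ (forall q, V q -> U q) /\
       coord_system V u v /\
       metric_is_du_dv V g u v /\
       (forall q, V q -> psi q = v q)).
Proof.
  intros HU [Hgs [Hsym Hdet]] Hpsi Hnv Hck Hnull.
  assert (Hparallel := dpsi_parallel U g psi HU Hgs Hsym Hdet Hpsi Hnv Hck Hnull).
  split.
  - intros p Up.
    exact (flat_of_parallel U g psi HU Hgs Hsym Hdet Hpsi Hparallel p Up (Hnv p Up)).
  - intros p Up.
    exact (null_coordinates U g psi HU Hgs Hsym Hdet Hpsi Hparallel Hnull p Up (Hnv p Up)).
Qed.
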